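(* Let $\alpha:X\to P(A\times X+1)$ be a discrete probabilistic transition system, $\langle\!\langle-\rangle\!\rangle:X\to\mathcal M(A^\infty)$ its trace semantics, and $\beta$ and $\varphi_\beta$ as in the context. Then for all $x,y\in X$: $\langle\!\langle x\rangle\!\rangle=\langle\!\langle y\rangle\!\rangle$ if and only if $\varphi_\beta(\delta_x)=\varphi_\beta(\delta_y)$.
   Context: $X$ a set, $A$ a finite alphabet, $1=\{*\}$, $\mathbb I=[0,1]$; $P(Y)$ is the set of finitely supported probability distributions on $Y$; $\delta_x$ the point mass at $x$. $A^\infty=A^*\cup A^\omega$ with $\sigma$-algebra generated by $\{\emptyset\}\cup\{\{w\}\mid w\in A^*\}\cup\{wA^\infty\mid w\in A^*\}$, and $\mathcal M(A^\infty)$ is the set of sub-probability measures on it. The trace semantics $\langle\!\langle x\rangle\!\rangle\in\mathcal M(A^\infty)$ is the unique family of measures with $\langle\!\langle x\rangle\!\rangle(A^\infty)=1$, $\langle\!\langle x\rangle\!\rangle(\{\varepsilon\})=\alpha(x)( * )$, $\langle\!\langle x\rangle\!\rangle(awA^\infty)=\sum_y\alpha(x)(a,y)\langle\!\langle y\rangle\!\rangle(wA^\infty)$, $\langle\!\langle x\rangle\!\rangle(\{aw\})=\sum_y\alpha(x)(a,y)\langle\!\langle y\rangle\!\rangle(\{w\})$. Let $\mathbb R^X_\omega$ be the real vector space of finitely supported functions $X\to\mathbb R$, and $\beta=\langle\beta_1,\beta_*,a\mapsto\tau_a\rangle:\mathbb R^X_\omega\to\mathbb R\times\mathbb R\times(\mathbb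 R^X_\omega)^A$ the linear maps $\beta_1(u)=\sum_{x}u(x)\sum_{z\in A\times X+1}\alpha(x)(z)=\sum_x u(x)$, $\beta_*(u)=\sum_x u(x)\alpha(x)( * )$, $\tau_a(u)(y)=\sum_x u(x)\alpha(x)(a,y)$. $\varphi_\beta:\mathbb R^X_\omega\to(\mathbb R\times\mathbb R)^{A^*}$ is the map $\varphi_\beta(u)(\varepsilon)=(\beta_1(u),\beta_*(u))$, $\varphi_\beta(u)(aw)=\varphi_\beta(\tau_a(u))(w)$ (the final-coalgebra morphism for the functor $Y\mapsto\mathbb R\times\mathbb R\times Y^A$). *)

From Stdlib Require Import Reals Lra List ClassicalEpsilon.
Import ListNotations.
Open Scope R_scope.
Set Implicit Arguments.

Definition eqb_cl {T : Type} (a b : T) : bool :=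
  if excluded_middle_informative (a = b) then true else false.

Record pdist (Y : Type) := {
  dsupp : list Y;
  dval  : Y -> R;
  dsupp_nodup : NoDup dsupp;
  dsupp_spec  : forall z, dval z <> 0 -> In z dsupp;
  dval_nonneg : forall z, 0 <= dval z;
  dval_sum1   : fold_right Rplus 0 (map dval dsupp) = 1
}.

Section PTS.
Variables (A X : Type).
(* alpha : X -> P(A x X + 1); None plays the role of the point of 1. *)
Variable alpha : X -> pdist (option (A * X)).

Definition sum_succ (x : X) (a : A) (g : X -> R) : R :=
  fold_right Rplus 0
    (map (fun z => match z with
                   | Some (b, y) => if eqb_cl a b then dval (alpha x) z * g y else 0
                   | None => 0 end)
         (dsupp (alpha x))).

(* Finitely supported functions X -> R represented as formal finite sums
   sum_i c_i * delta_{x_i}, i.e. lists of pairs (x_i, c_i). *)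
Definition fsfun := list (X * R).

Definition delta (x : X) : fsfun := [(x, 1)].

Definition beta1 (u : fsfun) : R :=
  fold_right Rplus 0
    (map (fun p => snd p * fold_right Rplus 0 (map (dval (alpha (fst p))) (dsupp (alpha (fst p))))) u).

Definition betastar (u : fsfun) : R :=
  fold_right Rplus 0 (map (fun p => snd p * dval (alpha (fst p)) None) u).

Definition tau (a : A) (u : fsfun) : fsfun :=
  flat_map (fun p =>
     flat_map (fun z => match z with
                        | Some (b, y) => if eqb_cl a b
                                         then [(y, snd p * dval (alpha (fst p)) z)] else []
                        | None => [] end)
              (dsupp (alpha (fst p)))) u.

Fixpoint phi_beta (u : fsfun) (w : list A) {struct w} : R * R :=
  match w with
  | [] => (beta1 u, betastar u)
  | a :: w' => phi_beta (tau a u) w'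
  end.

End PTS.

(* A word is a sequence nat -> option A that, once undefined, stays undefined. *)
Record Ainf (A : Type) := {
  letter : nat -> option A;
  letter_wf : forall n, letter n = None -> letter (S n) = None
}.

Definition set_ (A : Type) := Ainf A -> Prop.

Definition sing {A : Type} (w : list A) : set_ A :=
  fun s => forall n, letter s n = nth_error w n.

Definition cyl {A : Type} (w : list A) : set_ A :=
  fun s => forall n, (n < length w)%nat -> letter s n = nth_error w n.

Definition fullset {A : Type} : set_ A := fun _ => True.
Definition emptyset {A : Type} : set_ A := fun _ => False.

Inductive measurable {A : Type} : set_ A -> Prop :=
  | meas_empty : measurable emptyset
  | meas_sing  : forall w, measurable (sing w)
  | meas_cyl   : forall w, measurable (cyl w)
  | meas_compl : forall S, measurable S -> measurable (fun s => ~ S s)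
  | meas_union : forall F : nat -> set_ A, (forall n, measurable (F n)) ->
                   measurable (fun s => exists n, F n s)
  | meas_ext   : forall S T, measurable S -> (forall s, S s <-> T s) -> measurable T.

Record measure (A : Type) := {
  mu : set_ A -> R;
  mu_ext : forall S T, measurable S -> (forall s, S s <-> T s) -> mu S = mu T;
  mu_nonneg : forall S, measurable S -> 0 <= mu S;
  mu_empty : mu emptyset = 0;
  mu_sigma_add : forall F : nat -> set_ A,
      (forall n, measurable (F n)) ->
      (forall n m s, n <> m -> F n s -> F m s -> False) ->
      infinite_sum (fun n => mu (F n)) (mu (fun s => exists n, F n s));
  mu_sub : mu fullset <= 1
}.

Definition measure_eq {A : Type} (m1 m2 : measure A) : Prop :=
  forall S, measurable S -> mu m1 S = mu m2 S.

Definition is_trace_semantics {A X : Type} (alpha : X -> pdist (option (A * X)))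
    (tr : X -> measure A) : Prop :=
  forall x,
    mu (tr x) fullset = 1 /\
    mu (tr x) (sing []) = dval (alpha x) None /\
    (forall a w, mu (tr x) (cyl (a :: w)) = sum_succ alpha x a (fun y => mu (tr y) (cyl w))) /\
    (forall a w, mu (tr x) (sing (a :: w)) = sum_succ alpha x a (fun y => mu (tr y) (sing w))).

(* Unfolding the coalgebra map shows that phi_beta(delta x)(w) is the pair
   (tr x (w A^infty), tr x {w}).  So phi_beta(delta x) = phi_beta(delta y) says
   exactly that tr x and tr y agree on all cylinders and singletons.  Two such
   sets are either disjoint or nested, so they form (with the empty set) a
   pi-system generating the sigma-algebra, and Dynkin's pi-lambda argument
   extends the agreement to every measurable set, both measures having total
   mass 1. *)

From Stdlib Require Import Reals List.
From Stdlib Require Import Lra Lia Classical FunctionalExtensionality.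
Import ListNotations.
Open Scope R_scope.
Set Implicit Arguments.

Section Dynkin.

Variables (T : Type) (G : (T -> Prop) -> Prop).

Inductive dynkin : (T -> Prop) -> Prop :=
| dynkin_gen S : G S -> dynkin S
| dynkin_compl S : dynkin S -> dynkin (fun s => ~ S s)
| dynkin_disjoint_union (F : nat -> T -> Prop) :
    (forall n, dynkin (F n)) ->
    (forall n m s, n <> m -> F n s -> F m s -> False) ->
    dynkin (fun s => exists n, F n s)
| dynkin_ext S S' : dynkin S -> (forall s, S s <-> S' s) -> dynkin S'.

Hypothesis dynkin_empty : dynkin (fun _ => False).
Hypothesis gen_setI : forall S S', G S -> G S' -> dynkin (fun s => S s /\ S' s).

Definition seq2 (P Q : T -> Prop) (n : nat) : T -> Prop :=
  match n with 0 => P | 1 => Q | _ => fun _ => False end.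

Lemma dynkin_disjoint_union2 (P Q : T -> Prop) :
  dynkin P -> dynkin Q -> (forall s, P s -> Q s -> False) ->
  dynkin (fun s => P s \/ Q s).
Proof.
  intros HP HQ Hdisj.
  apply dynkin_ext with (S := fun s => exists n, seq2 P Q n s).
  - apply dynkin_disjoint_union.
    + intros [|[|n]]; simpl; auto.
    + intros [|[|n]] [|[|m]] s Hnm; simpl; try tauto; try congruence; eauto.
  - intros s; split.
    + intros [[|[|n]] H]; simpl in H; tauto.
    + intros [H|H]; [exists 0%nat | exists 1%nat]; exact H.
Qed.

(* The "good sets" argument: the sets D with D /\ E in the system form a
   Dynkin system, since ~D /\ E = ~((D /\ E) \/ ~E). *)
Lemma dynkin_setI_r (E : T -> Prop) :
  dynkin E -> (forall S, G S -> dynkin (fun s => S s /\ E s)) ->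
  forall D, dynkin D -> dynkin (fun s => D s /\ E s).
Proof.
  intros HE HG D HD; induction HD as [S HS|S _ IH|F _ IH Hdisj|S S' _ IH Hext].
  - auto.
  - apply dynkin_ext with (S := fun s => ~ ((S s /\ E s) \/ ~ E s)).
    + apply dynkin_compl, dynkin_disjoint_union2; auto using dynkin_compl; tauto.
    + intros s; tauto.
  - apply dynkin_ext with (S := fun s => exists n, F n s /\ E s).
    + apply dynkin_disjoint_union; auto.
      intros n m s Hnm [Hn _] [Hm _]; eauto.
    + intros s; split.
      * intros [n [Hn HEs]]; eauto.
      * intros [[n Hn] HEs]; eauto.
  - eapply dynkin_ext; [exact IH|]. intros s; specialize (Hext s); tauto.
Qed.

Lemma dynkin_setI (D E : T -> Prop) :
  dynkin D -> dynkin E -> dynkin (fun s => D s /\ E s).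
Proof.
  intros HD HE.
  assert (Hgen : forall S D', G S -> dynkin D' -> dynkin (fun s => D' s /\ S s)).
  { intros S D' HS HD'. apply dynkin_setI_r; auto using dynkin_gen. }
  apply dynkin_setI_r; auto.
  intros S HS. eapply dynkin_ext; [apply (Hgen S E HS HE)|]. intros s; tauto.
Qed.

Lemma dynkin_prefix_avoid (F : nat -> T -> Prop) :
  (forall n, dynkin (F n)) ->
  forall n, dynkin (fun s => forall k, (k < n)%nat -> ~ F k s).
Proof.
  intros HF; induction n as [|n IH].
  - eapply dynkin_ext; [apply dynkin_compl, dynkin_empty|].
    intros s; split; intros; [lia|tauto].
  - eapply dynkin_ext; [apply (dynkin_setI IH (dynkin_compl (HF n)))|].
    intros s; split.
    + intros [Hlt Hn] k Hk. destruct (Nat.eq_dec k n); subst; auto. apply Hlt; lia.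
    + intros H; split; [intros k Hk; apply H; lia | apply H; lia].
Qed.

(* Disjointify: s lies in the n-th piece iff n is the least index with F n s. *)
Lemma dynkin_union (F : nat -> T -> Prop) :
  (forall n, dynkin (F n)) -> dynkin (fun s => exists n, F n s).
Proof.
  intros HF.
  apply dynkin_ext with
    (S := fun s => exists n, F n s /\ forall k, (k < n)%nat -> ~ F k s).
  - apply dynkin_disjoint_union.
    + intros n. apply dynkin_setI; auto using dynkin_prefix_avoid.
    + intros n m s Hnm [Hn Hn_least] [Hm Hm_least].
      destruct (Nat.lt_total n m) as [Hl|[Hl|Hl]];
        [eapply Hm_least; eauto | lia | eapply Hn_least; eauto].
  - intros s; split.
    + intros [n [Hn _]]; eauto.
    + intros [n Hn].
      induction n as [n IH] using (well_founded_induction Wf_nat.lt_wf).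
      destruct (classic (exists k, (k < n)%nat /\ F k s)) as [[k [Hk HFk]]|Hnone].
      * exact (IH k Hk HFk).
      * exists n; split; auto. intros k Hk HFk; apply Hnone; eauto.
Qed.

End Dynkin.

Lemma infinite_sum_two (u : nat -> R) (l : R) :
  (forall n, (n >= 2)%nat -> u n = 0) -> infinite_sum u l -> l = u 0%nat + u 1%nat.
Proof.
  intros Hzero Hl. apply (uniqueness_sum u); auto.
  assert (Hpartial : forall n, (n >= 1)%nat -> sum_f_R0 u n = u 0%nat + u 1%nat).
  { induction n as [|n IH]; intros Hn; [lia|]. destruct n; [simpl; ring|].
    change (sum_f_R0 u (S (S n))) with (sum_f_R0 u (S n) + u (S (S n))).
    rewrite IH, (Hzero (S (S n))) by lia. ring. }
  intros eps Heps. exists 1%nat. intros n Hn. rewrite Hpartial by lia.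
  unfold R_dist. rewrite Rminus_diag, Rabs_R0; lra.
Qed.

Lemma measurable_fullset {A : Type} : measurable (@fullset A).
Proof.
  eapply meas_ext; [apply meas_compl, meas_empty|]. unfold emptyset, fullset; tauto.
Qed.

Lemma mu_fullset_compl {A : Type} (m : measure A) (S : set_ A) :
  measurable S -> mu m fullset = mu m S + mu m (fun s => ~ S s).
Proof.
  intros HS.
  set (F := seq2 S (fun s => ~ S s)).
  assert (HF : forall n, measurable (F n)).
  { intros [|[|n]]; simpl; auto using meas_compl.
    eapply meas_ext; [apply meas_empty|]. unfold emptyset; tauto. }
  assert (Hdisj : forall n k s, n <> k -> F n s -> F k s -> False).
  { intros [|[|n]] [|[|k]] s Hnk; simpl; try tauto; congruence. }
  pose proof (mu_sigma_add m F HF Hdisj) as Hsum.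
  apply infinite_sum_two in Hsum.
  - simpl in Hsum. rewrite <- Hsum. symmetry. apply mu_ext.
    + apply meas_union; auto.
    + intros s; split; [unfold fullset; auto|].
      intros _. destruct (classic (S s)); [exists 0%nat | exists 1%nat]; simpl; auto.
  - intros [|[|n]] Hn; try lia. simpl.
    rewrite <- (mu_empty m). apply mu_ext; [|unfold emptyset; tauto].
    eapply meas_ext; [apply meas_empty|]. unfold emptyset; tauto.
Qed.

Lemma dynkin_mu_eq {A : Type} (m1 m2 : measure A) (G : set_ A -> Prop) :
  (forall S, G S -> measurable S /\ mu m1 S = mu m2 S) ->
  mu m1 fullset = mu m2 fullset ->
  forall S, dynkin G S -> measurable S /\ mu m1 S = mu m2 S.
Proof.
  intros HG Hfull S HS; induction HS as [S HS|S _ [HSm HSeq]|F _ IH Hdisj|S S' _ [HSm HSeq] Hext].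
  - auto.
  - split; [apply meas_compl; auto|].
    pose proof (mu_fullset_compl m1 HSm). pose proof (mu_fullset_compl m2 HSm). lra.
  - assert (HF : forall n, measurable (F n)) by (intros n; apply IH).
    split; [apply meas_union; auto|].
    pose proof (mu_sigma_add m1 F HF Hdisj) as Hsum1.
    pose proof (mu_sigma_add m2 F HF Hdisj) as Hsum2.
    replace (fun n => mu m1 (F n)) with (fun n => mu m2 (F n)) in Hsum1
      by (apply functional_extensionality; intros n; symmetry; apply IH).
    eapply uniqueness_sum; eauto.
  - split; [eapply meas_ext; eauto|].
    rewrite <- (mu_ext m1 S' HSm Hext), <- (mu_ext m2 S' HSm Hext); auto.
Qed.

Inductive word_set {A : Type} : set_ A -> Prop :=
| word_set_sing w : word_set (sing w)
| word_set_cyl w : word_set (cyl w).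

Lemma word_set_measurable {A : Type} (S : set_ A) : word_set S -> measurable S.
Proof. intros []; constructor. Qed.

Lemma word_set_nested {A : Type} (S S' : set_ A) (s0 : Ainf A) :
  word_set S -> word_set S' -> S s0 -> S' s0 ->
  (forall s, S s -> S' s) \/ (forall s, S' s -> S s).
Proof.
  intros [w|w] [v|v] H0 H0'; unfold sing, cyl in *.
  - left; intros s Hs n. rewrite Hs, <- H0, H0'; auto.
  - left; intros s Hs n Hn. rewrite Hs, <- H0, H0'; auto.
  - right; intros s Hs n Hn. rewrite Hs, <- H0', H0; auto.
  - destruct (Nat.le_ge_cases (length w) (length v)).
    + right; intros s Hs n Hn. rewrite Hs, <- H0', H0; auto; lia.
    + left; intros s Hs n Hn. rewrite Hs, <- H0, H0'; auto; lia.
Qed.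

Lemma dynkin_word_set_empty {A : Type} : dynkin (@word_set A) (fun _ => False).
Proof.
  eapply dynkin_ext; [apply dynkin_compl, dynkin_gen, (word_set_cyl [])|].
  intros s; unfold cyl; simpl; split; [|tauto].
  intros Hnot; apply Hnot; intros n Hn; lia.
Qed.

Lemma word_set_setI {A : Type} (S S' : set_ A) :
  word_set S -> word_set S' -> dynkin word_set (fun s => S s /\ S' s).
Proof.
  intros HS HS'.
  destruct (classic (exists s0, S s0 /\ S' s0)) as [[s0 [H0 H0']]|Hdisj].
  - destruct (word_set_nested s0 HS HS' H0 H0') as [Hsub|Hsub].
    + apply dynkin_ext with (S := S); [apply dynkin_gen; auto|]. firstorder.
    + apply dynkin_ext with (S := S'); [apply dynkin_gen; auto|]. firstorder.
  - eapply dynkin_ext; [apply dynkin_word_set_empty|]. firstorder.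
Qed.

Lemma measurable_dynkin_word_set {A : Type} (S : set_ A) :
  measurable S -> dynkin word_set S.
Proof.
  induction 1.
  - apply dynkin_word_set_empty.
  - apply dynkin_gen, word_set_sing.
  - apply dynkin_gen, word_set_cyl.
  - apply dynkin_compl; auto.
  - apply dynkin_union; auto using dynkin_word_set_empty, word_set_setI.
  - eapply dynkin_ext; eauto.
Qed.

Lemma word_set_mu_eq {A : Type} (m1 m2 : measure A) :
  mu m1 fullset = mu m2 fullset ->
  (forall w, mu m1 (cyl w) = mu m2 (cyl w)) ->
  (forall w, mu m1 (sing w) = mu m2 (sing w)) ->
  measure_eq m1 m2.
Proof.
  intros Hfull Hcyl Hsing S HS.
  apply (dynkin_mu_eq (G := word_set) m1 m2); auto using measurable_dynkin_word_set.
  intros S' HS'; split; [apply word_set_measurable; exact HS'|].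
  destruct HS'; auto.
Qed.

Definition fs_sum {X : Type} (u : list (X * R)) (f : X -> R) : R :=
  fold_right Rplus 0 (map (fun p => snd p * f (fst p)) u).

Lemma fs_sum_app {X : Type} (u v : list (X * R)) (f : X -> R) :
  fs_sum (u ++ v) f = fs_sum u f + fs_sum v f.
Proof. unfold fs_sum; induction u; simpl; [ring|]. rewrite IHu; ring. Qed.

Lemma fs_sum_tau {A X : Type} (alpha : X -> pdist (option (A * X))) a u f :
  fs_sum (tau alpha a u) f = fs_sum u (fun x => sum_succ alpha x a f).
Proof.
  induction u as [|[x c] u IH]; [reflexivity|].
  unfold tau in *; simpl flat_map. rewrite fs_sum_app, IH.
  unfold fs_sum at 3; simpl. f_equal.
  unfold sum_succ.
  induction (dsupp (alpha x)) as [|[[b y]|] l IHl]; simpl; rewrite ?fs_sum_app, ?IHl;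
    [unfold fs_sum; simpl; ring | | unfold fs_sum; simpl; ring].
  destruct (eqb_cl a b); unfold fs_sum; simpl; ring.
Qed.

Section TraceSemantics.

Variables (A X : Type) (alpha : X -> pdist (option (A * X))) (tr : X -> measure A).
Hypothesis Htr : is_trace_semantics alpha tr.

Lemma mu_cyl_nil (x : X) : mu (tr x) (cyl []) = 1.
Proof.
  destruct (Htr x) as [Hfull _]. rewrite <- Hfull. apply mu_ext; [apply meas_cyl|].
  intros s; unfold cyl, fullset; split; auto. intros _ n Hn; simpl in Hn; lia.
Qed.

Lemma phi_beta_trace w u :
  phi_beta alpha u w =
  (fs_sum u (fun x => mu (tr x) (cyl w)), fs_sum u (fun x => mu (tr x) (sing w))).
Proof.
  revert u; induction w as [|a w IH]; intros u; simpl.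
  - unfold beta1, betastar, fs_sum. f_equal; f_equal; apply map_ext; intros [x c]; simpl.
    + rewrite dval_sum1, mu_cyl_nil; reflexivity.
    + destruct (Htr x) as [_ [Hnil _]]. rewrite Hnil; reflexivity.
  - rewrite IH, !fs_sum_tau.
    unfold fs_sum; f_equal; f_equal; apply map_ext; intros [x c]; simpl;
      destruct (Htr x) as [_ [_ [Hcyl Hsing]]]; [rewrite Hcyl|rewrite Hsing]; reflexivity.
Qed.

Lemma phi_beta_delta x w :
  phi_beta alpha (delta x) w = (mu (tr x) (cyl w), mu (tr x) (sing w)).
Proof. rewrite phi_beta_trace. unfold fs_sum, delta; simpl. f_equal; ring. Qed.

End TraceSemantics.

Theorem mainTheorem16 (A : Type) (A_finite : exists l : list A, forall a, In a l)
  (X : Type) (alpha : X -> pdist (option (A * X))) (tr : X -> measure A)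
  (Htr : is_trace_semantics alpha tr) (x y : X) :
  measure_eq (tr x) (tr y) <-> phi_beta alpha (delta x) = phi_beta alpha (delta y).
Proof.
  split.
  - intros Heq. apply functional_extensionality; intros w.
    rewrite !(phi_beta_delta Htr), (Heq _ (meas_cyl w)), (Heq _ (meas_sing w)).
    reflexivity.
  - intros Hphi.
    assert (Hw : forall w, mu (tr x) (cyl w) = mu (tr y) (cyl w) /\
                           mu (tr x) (sing w) = mu (tr y) (sing w)).
    { intros w. pose proof (equal_f Hphi w) as Hphiw.
      rewrite !(phi_beta_delta Htr) in Hphiw. injection Hphiw; auto. }
    apply word_set_mu_eq; try apply Hw.
    destruct (Htr x) as [-> _], (Htr y) as [-> _]; reflexivity.
Qed.
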